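(* Let $n,m$ be positive integers, let ${\cal P}$ be an additive hereditary graph class with ${\cal P}\subseteq Free(K_n)$, and let ${\cal Q}$ be a hereditary graph class whose complement class $\overline{{\cal Q}}$ is additive, with ${\cal Q}\subseteq Free(\overline{K}_m)$. Then there exists a constant $\tau=\tau({\cal P},{\cal Q})$ such that for every graph $G=(V,E)\in{\cal P}\circ{\cal Q}$ and every subset $B\subseteq V$ with $G[B]\in{\cal P}$, at least one of the following holds: (a) there is a subset $A\subseteq V$ such that $G[A]\in{\cal P}$, $G[V\setminus A]\in{\cal Q}$, and $|A\setminus B|\le\tau$; (b) there is a subset $C\subseteq V$ such that $G[C]\in{\cal P}$, $|C|=|B|+1$, and $|B\setminus C|\le\tau$.
   Context: All graphs are finite and simple; classes are closed under isomorphism. $K_n$ is the complete graph on $n$ vertices and $\overline{K}_m$ the edgeless graph on $m$ vertices. $Free(Y)$ is the class of graphs containing no induced subgraph isomorphic to a graph in $Y$. A class is hereditary if closed under vertex deletion, additive if closed under disjoint union; $\overline{{\cal Q}}=\{\overline{G}\mid G\in{\cal Q}\}$. $G[U]$ is the subgraph induced by $U$. ${\cal P}\circ{\cal Q}$ is the class of graphs $G$ whose vertex set can be partitioned into $V_1,V_2$ with $G[V_1]\in{\cal P}$, $G[V_2]\in{\cal Q}$. *)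

(* Finite simple graphs are pairs (T : finType, e : rel T)
   with e symmetric and irreflexive. A graph class is a predicate on such pairs. *)
From mathcomp Require Import all_boot.
Set Implicit Arguments. Unset Strict Implicit. Unset Printing Implicit Defensive.

Definition simple_graph (T : finType) (e : rel T) : Prop :=
  symmetric e /\ irreflexive e.

Definition gclass := forall T : finType, rel T -> Prop.

Definition induced (T : finType) (e : rel T) (U : {set T}) :
  rel {x : T | x \in U} := fun x y => e (val x) (val y).
Arguments induced [T] e U.

Definition giso (T1 T2 : finType) (e1 : rel T1) (e2 : rel T2) : Prop :=
  exists f : T1 -> T2, bijective f /\ forall x y, e2 (f x) (f y) = e1 x y.

Definition iso_closed (P : gclass) : Prop :=
  forall (T1 T2 : finType) (e1 : rel T1) (e2 : rel T2),
    giso e1 e2 -> P T1 e1 -> P T2 e2.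

Definition hereditary (P : gclass) : Prop :=
  forall (T : finType) (e : rel T) (v : T),
    simple_graph e -> P T e -> P _ (induced e [set~ v]).

Definition gunion (T1 T2 : finType) (e1 : rel T1) (e2 : rel T2) : rel (T1 + T2) :=
  fun x y => match x, y with
             | inl a, inl b => e1 a b
             | inr a, inr b => e2 a b
             | _, _ => false
             end.

Definition additive (P : gclass) : Prop :=
  forall (T1 T2 : finType) (e1 : rel T1) (e2 : rel T2),
    simple_graph e1 -> simple_graph e2 -> P T1 e1 -> P T2 e2 ->
    P _ (gunion e1 e2).

Definition gcompl (T : finType) (e : rel T) : rel T :=
  fun x y => (x != y) && ~~ e x y.

Definition cclass (Q : gclass) : gclass :=
  fun T e => exists e' : rel T, simple_graph e' /\ Q T e' /\ e =2 gcompl e'.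

Definition Kn (n : nat) : rel 'I_n := fun x y => x != y.
Definition Kbar (m : nat) : rel 'I_m := fun _ _ => false.

Definition has_induced (T : finType) (e : rel T) (S : finType) (h : rel S) : Prop :=
  exists U : {set T}, giso h (induced e U).

Definition subclass_free (P : gclass) (S : finType) (h : rel S) : Prop :=
  forall (T : finType) (e : rel T), simple_graph e -> P T e -> ~ has_induced e h.

Definition in_comp (P Q : gclass) (T : finType) (e : rel T) : Prop :=
  exists V1 : {set T}, P _ (induced e V1) /\ Q _ (induced e (~: V1)).

(** Fix a partition [V = V1 ∪ V2] with [G[V1] ∈ P] and [G[V2] ∈ Q]. An induced
    subgraph of [G[B ∩ V2]] is one of [G[B]] and of [G[V2]], so [G[B ∩ V2]]
    contains neither [K_n] nor [\bar K_m], and Ramsey's theorem gives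
    [|B ∖ V1| < 2^(n+m) =: τ]. If [|V1 ∖ B| ≤ τ], then [A = V1] gives (a).
    Otherwise [V1 ∖ B] is larger than [B ∖ V1], so trading [B ∖ V1] for
    [|B ∖ V1| + 1] vertices of [V1 ∖ B] yields a subset [C] of [V1], hence
    [G[C] ∈ P] by heredity, with [|C| = |B| + 1] and [B ∖ C = B ∖ V1]. *)

From mathcomp Require Import all_boot zify.

Set Implicit Arguments.
Unset Strict Implicit.
Unset Printing Implicit Defensive.

Section Exchange.

Variable T : finType.
Implicit Types A B V : {set T}.

Lemma subset_of_card A k : k <= #|A| -> exists2 D : {set T}, D \subset A & #|D| = k.
Proof.
case/card_geqP=> s [uniq_s size_s sub_s]; exists [set x in s].
  by apply/subsetP=> x; rewrite inE => /sub_s.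
by rewrite cardsE (card_uniqP uniq_s).
Qed.

Lemma exchange_subset B V : #|B :\: V| < #|V :\: B| ->
  exists C : {set T}, [/\ C \subset V, #|C| = #|B|.+1 & B :\: C = B :\: V].
Proof.
case/subset_of_card=> D /subsetP sD cardD; exists ((B :&: V) :|: D).
have notBD x : x \in D -> x \notin B by move/sD; rewrite inE => /andP[].
split.
- by rewrite subUset subsetIr; apply/subsetP=> x /sD; rewrite inE => /andP[].
- have BVD0 : B :&: V :&: D = set0.
    apply/setP=> x; rewrite !inE.
    by case: (boolP (x \in D)) => [/notBD/negbTE->|]; rewrite ?andbF.
  by rewrite cardsU BVD0 cards0 cardD -(cardsID V B); lia.
- apply/setP=> x; rewrite !inE.
  case: (boolP (x \in D)) => [/notBD/negbTE->|_]; first by rewrite !andbF.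
  by rewrite orbF; case: (x \in B); rewrite ?andbF.
Qed.

End Exchange.

Section InducedSubgraphs.

Variables (T : finType) (e : rel T).
Hypotheses (e_sym : symmetric e) (e_irr : irreflexive e).
Implicit Types C S U W X Y : {set T}.

Definition clique U := {in U &, forall x y, x != y -> e x y}.
Definition independent U := {in U &, forall x y, e x y = false}.

Lemma clique_setU1 v U : clique U -> {in U, forall x, e v x} -> clique (v |: U).
Proof.
move=> clU evU x y; rewrite !inE => /predU1P[->|xU] /predU1P[->|yU]; rewrite ?eqxx //.
- by move=> _; apply: evU.
- by move=> _; rewrite e_sym evU.
- exact: clU.
Qed.

Lemma independent_setU1 v U :
  independent U -> {in U, forall x, ~~ e v x} -> independent (v |: U).
Proof.
move=> indU evU x y; rewrite !inE => /predU1P[->|xU] /predU1P[->|yU].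
- exact: e_irr.
- exact/negbTE/evU.
- by rewrite e_sym; apply/negbTE/evU.
- exact: indU.
Qed.

Lemma ramsey_pow2 a b S : 2 ^ (a + b) <= #|S| ->
  (exists U, [/\ U \subset S, #|U| = a & clique U]) \/
  (exists U, [/\ U \subset S, #|U| = b & independent U]).
Proof.
elim: a b S => [|a IHa] b S.
  by move=> _; left; exists set0; rewrite sub0set cards0; split=> // x; rewrite inE.
elim: b S => [|b IHb] S.
  by move=> _; right; exists set0; rewrite sub0set cards0; split=> // x; rewrite inE.
move=> leS; have [v vS] : exists v, v \in S.
  by apply/card_gt0P; apply: leq_trans leS; rewrite expn_gt0.
pose N := (S :\ v) :&: [set x | e v x]; pose M := (S :\ v) :\: [set x | e v x].
have cardNM : #|N| + #|M| = #|S| - 1 by rewrite cardsID (cardsD1 v S) vS; lia.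
have sNS : N \subset S := subset_trans (subsetIl _ _) (subsetDl _ _).
have sMS : M \subset S := subset_trans (subsetDl _ _) (subsetDl _ _).
have notinN U : U \subset N -> v \notin U.
  by move/subsetP=> sU; apply/negP=> /sU; rewrite /N !inE eqxx.
have notinM U : U \subset M -> v \notin U.
  by move/subsetP=> sU; apply/negP=> /sU; rewrite /M !inE eqxx /= andbF.
have [leN|leM] : 2 ^ (a + b.+1) <= #|N| \/ 2 ^ (a.+1 + b) <= #|M|.
  by move: leS cardNM; rewrite !addSn !addnS expnS; move: #|N| #|M| => k l; lia.
- have [[U [sUN cardU clU]]|[U [sUN cardU indU]]] := IHa _ _ leN; last first.
    by right; exists U; rewrite cardU (subset_trans sUN).
  left; exists (v |: U); split.
  + by rewrite subUset sub1set vS (subset_trans sUN).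
  + by rewrite cardsU1 notinN // cardU.
  + by apply: clique_setU1 => // x /(subsetP sUN); rewrite !inE => /andP[].
- have [[U [sUM cardU clU]]|[U [sUM cardU indU]]] := IHb _ leM.
    by left; exists U; rewrite cardU (subset_trans sUM).
  right; exists (v |: U); split.
  + by rewrite subUset sub1set vS (subset_trans sUM).
  + by rewrite cardsU1 notinM // cardU.
  + by apply: independent_setU1 => // x /(subsetP sUM); rewrite !inE => /andP[].
Qed.

Lemma has_induced_enum W U (h : rel 'I_#|U|) : U \subset W ->
  (forall i j, h i j = e (enum_val i) (enum_val j)) -> has_induced (induced e W) h.
Proof.
move=> /subsetP sUW eh; pose U' := [set y : {x | x \in W} | val y \in U].
have inU' i : Sub (enum_val i) (sUW _ (enum_valP i)) \in U' by rewrite inE SubK enum_valP.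
pose g i : {y | y \in U'} := Sub (Sub (enum_val i) _) (inU' i).
exists U', g; split=> [|i j]; last by rewrite eh.
apply: inj_card_bij => [i j /(congr1 (val \o val)) /enum_val_inj //|].
rewrite card_sig card_ord -(card_imset (mem U') val_inj); apply: subset_leq_card.
by apply/subsetP=> x /imsetP[y + ->]; rewrite inE.
Qed.

Lemma has_Kn_clique W U : U \subset W -> clique U -> has_induced (induced e W) (@Kn #|U|).
Proof.
move=> sUW clU; apply: has_induced_enum => // i j; rewrite /Kn.
have [->|ij] := eqVneq i j; first by rewrite e_irr.
by rewrite clU ?enum_valP // (inj_eq enum_val_inj).
Qed.

Lemma has_Kbar_independent W U :
  U \subset W -> independent U -> has_induced (induced e W) (@Kbar #|U|).
Proof. by move=> sUW indU; apply: has_induced_enum => // i j; rewrite indU ?enum_valP. Qed.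

Lemma simple_induced W : simple_graph (induced e W).
Proof. by split=> [x y|x]; [apply: e_sym|apply: e_irr]. Qed.

Lemma card_free_meet_lt (P Q : gclass) n m X Y :
  subclass_free P (@Kn n) -> subclass_free Q (@Kbar m) ->
  P _ (induced e X) -> Q _ (induced e Y) -> #|X :&: Y| < 2 ^ (n + m).
Proof.
move=> freeP freeQ PX QY; rewrite ltnNge; apply/negP=> /ramsey_pow2.
case=> [[U [sU cardU clU]]|[U [sU cardU indU]]].
- apply: (freeP _ _ (simple_induced X) PX); rewrite -cardU.
  exact: has_Kn_clique (subset_trans sU (subsetIl _ _)) clU.
- apply: (freeQ _ _ (simple_induced Y) QY); rewrite -cardU.
  exact: has_Kbar_independent (subset_trans sU (subsetIr _ _)) indU.
Qed.

Lemma induced_setD1_giso W v (vW : v \in W) :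
  giso (induced (induced e W) [set~ Sub v vW]) (induced e (W :\ v)).
Proof.
have inWv (y : {y | y \in [set~ (Sub v vW : {x | x \in W})]}) : val (val y) \in W :\ v.
  rewrite !inE (valP (val y)) andbT; apply: contraTneq (valP y) => yv.
  by rewrite !inE negbK; apply/eqP/val_inj.
exists (fun y => Sub (val (val y)) (inWv y)); split=> //.
apply: inj_card_bij => [x y /(congr1 val) /= /val_inj /val_inj //|].
rewrite !card_sig -[X in X <= _]/#|W :\ v| -[X in _ <= X]/#|[set~ _]| cardsC1 card_sig.
by rewrite (cardsD1 v W) vW.
Qed.

Variable P : gclass.
Hypotheses (hP : hereditary P) (iP : iso_closed P).

Lemma hereditary_setD1 W v : v \in W -> P (induced e W) -> P (induced e (W :\ v)).
Proof.
move=> vW PW; apply: iP (induced_setD1_giso vW) _.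
exact: hP (simple_induced W) PW.
Qed.

Lemma hereditary_subset C W : C \subset W -> P (induced e W) -> P (induced e C).
Proof.
have [k] := ubnP #|W :\: C|; elim: k W => // k IH W ltWC sCW PW.
have [/eqP|[v]] := set_0Vmem (W :\: C).
  by rewrite setD_eq0 => sWC; have -> : C = W by apply/eqP; rewrite eqEsubset sCW.
rewrite inE => /andP[vC vW]; apply: IH (hereditary_setD1 vW PW).
- rewrite -ltnS (leq_trans _ ltWC) // ltnS setDDl setUC -setDDl.
  by apply/proper_card/properD1; rewrite inE vC.
- apply/subsetP=> x xC; rewrite !inE (subsetP sCW) // andbT.
  by apply: contraNneq vC => <-.
Qed.

End InducedSubgraphs.

Theorem lemma3 (n m : nat) (P Q : gclass) :
  0 < n -> 0 < m ->
  iso_closed P -> iso_closed Q ->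
  additive P -> hereditary P -> subclass_free P (@Kn n) ->
  hereditary Q -> additive (cclass Q) -> subclass_free Q (@Kbar m) ->
  exists tau : nat,
    forall (T : finType) (e : rel T), simple_graph e ->
    in_comp P Q e ->
    forall B : {set T}, P _ (induced e B) ->
      (exists A : {set T}, P _ (induced e A) /\ Q _ (induced e (~: A)) /\
                           #|A :\: B| <= tau) \/
      (exists C : {set T}, P _ (induced e C) /\ #|C| = #|B| + 1 /\
                           #|B :\: C| <= tau).
Proof.
move=> _ _ iP _ _ hP freeP _ _ freeQ; exists (2 ^ (n + m)).
move=> T e [e_sym e_irr] [V1 [PV1 QV2]] B PB.
have small : #|B :\: V1| < 2 ^ (n + m).
  by rewrite setDE; apply: card_free_meet_lt freeP freeQ PB QV2.
have [leV1|ltV1] := leqP #|V1 :\: B| (2 ^ (n + m)); first by left; exists V1.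
right; have [C [sCV1 cardC BC]] := exchange_subset (ltn_trans small ltV1).
exists C; split; first exact: hereditary_subset sCV1 PV1.
by rewrite BC addn1 (ltnW small).
Qed.
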